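(* Let $T$ be a rank-one transformation given by a cutting and stacking construction and let $I$ be the level of $C_0$. Then for all sets $A,B\subseteq I$ which are finite unions of levels (of columns $C_j$), $$\frac{1}{a_n(I)}\sum_{k=0}^{n-1}\mu(A\cap T^kB)\longrightarrow \mu(A)\mu(B)\quad (n\to\infty).$$
   Context: $(X,\mathcal B,\mu)$ is a standard Borel space with a nonatomic $\sigma$-finite measure. A rank-one transformation given by cutting and stacking: $C_0$ consists of a single level $I$ of positive finite measure; column $C_n$ has height $h_n$, levels of measure $w_n$; it is cut into $r_n\ge 2$ subcolumns of equal width, $s_{n,k}\ge 0$ spacers are placed above the $k$-th subcolumn, and the subcolumns are stacked left to right to form $C_{n+1}$; $T$ maps each level to the one directly above it. For a set $F$ of positive finite measure, $u_k(F)=\mu(F\cap T^kF)/\mu(F)^2$ and $a_n(F)=\sum_{k=0}^{n-1}u_k(F)$. *)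

From Stdlib Require Import Reals List.
Open Scope R_scope.
Set Implicit Arguments.

(* Extended nonnegative values: [Some r] is finite, [None] is +infinity. *)
Definition esum_is (f : nat -> option R) (s : option R) : Prop :=
  match s with
  | Some l => exists g : nat -> R, (forall n, f n = Some (g n)) /\ infinite_sum g l
  | None => ~ (exists (g : nat -> R) (l : R),
                 (forall n, f n = Some (g n)) /\ infinite_sum g l)
  end.

Record MeasureSpace (X : Type) := {
  measurable : (X -> Prop) -> Prop;
  mu : (X -> Prop) -> option R;
  meas_empty : measurable (fun _ => False);
  meas_compl : forall E, measurable E -> measurable (fun x => ~ E x);
  meas_union : forall F : nat -> X -> Prop,
      (forall n, measurable (F n)) -> measurable (fun x => exists n, F n x);
  mu_empty : mu (fun _ => False) = Some 0;
  mu_nonneg : forall E r, mu E = Some r -> 0 <= r;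
  mu_sigma : forall F : nat -> X -> Prop,
      (forall n, measurable (F n)) ->
      (forall m n, m <> n -> forall x, F m x -> F n x -> False) ->
      esum_is (fun n => mu (F n)) (mu (fun x => exists n, F n x))
}.

(* real value of the measure (used only on sets of finite measure) *)
Definition muR (X : Type) (M : MeasureSpace X) (E : X -> Prop) : R :=
  match mu M E with Some r => r | None => 0 end.

Fixpoint sumR (f : nat -> R) (n : nat) : R :=
  match n with O => 0 | S m => sumR f m + f m end.

Fixpoint sumN (f : nat -> nat) (n : nat) : nat :=
  match n with O => O | S m => (sumN f m + f m)%nat end.

(* Cutting and stacking combinatorics: r n = number of cuts of C_n,
   s n k = number of spacers above the k-th subcolumn (k < r n). *)
Fixpoint height (r : nat -> nat) (s : nat -> nat -> nat) (n : nat) : nat :=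
  match n with
  | O => 1%nat
  | S m => (r m * height r s m + sumN (s m) (r m))%nat
  end.

(* position in C_{n+1} of the bottom of the k-th subcolumn of C_n *)
Definition offset (r : nat -> nat) (s : nat -> nat -> nat) (n k : nat) : nat :=
  (k * height r s n + sumN (s n) k)%nat.

(* width of the levels of C_n, w_0 = mu(I) *)
Fixpoint width (w0 : R) (r : nat -> nat) (n : nat) : R :=
  match n with O => w0 | S m => width w0 r m / INR (r m) end.

Definition iter_image (X : Type) (T : X -> X) (k : nat) (F : X -> Prop) : X -> Prop :=
  fun x => exists y, F y /\ Nat.iter k T y = x.

(* T is a rank-one transformation on (X, M) obtained by cutting and stacking
   with parameters r, s; L n i (i < height n) is the i-th level (from the
   bottom) of column C_n; C_0 has the single level L 0%nat 0%nat = I. *)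
Record RankOne (X : Type) (M : MeasureSpace X) (T : X -> X)
       (r : nat -> nat) (s : nat -> nat -> nat) (L : nat -> nat -> X -> Prop) : Prop := {
  ro_inv : exists Tinv : X -> X, (forall x, Tinv (T x) = x) /\ (forall x, T (Tinv x) = x)
           /\ (forall E, measurable M E -> measurable M (fun x => E (Tinv x)));
  ro_meas : forall E, measurable M E -> measurable M (fun x => E (T x));
  ro_pres : forall E, measurable M E -> mu M (fun x => E (T x)) = mu M E;
  ro_r : forall n, (2 <= r n)%nat;
  ro_Lmeas : forall n i, (i < height r s n)%nat -> measurable M (L n i);
  ro_I : 0 < muR M (L 0%nat 0%nat);
  ro_width : forall n i, (i < height r s n)%nat ->
      mu M (L n i) = Some (width (muR M (L 0%nat 0%nat)) r n);
  ro_disj : forall n i j, (i < height r s n)%nat -> (j < height r s n)%nat -> i <> j ->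
      forall x, L n i x -> L n j x -> False;
  ro_up : forall n i, (S i < height r s n)%nat ->
      forall x, L n i x <-> L n (S i) (T x);
  (* cutting: level i of C_n is the union of its r n pieces, the k-th piece
     being level (offset n k + i) of C_{n+1}; the remaining levels of C_{n+1}
     are the spacers *)
  ro_cut : forall n i, (i < height r s n)%nat ->
      forall x, L n i x <-> exists k, (k < r n)%nat /\ L (S n) (offset r s n k + i)%nat x;
  ro_cover : mu M (fun x => ~ exists n i, (i < height r s n)%nat /\ L n i x) = Some 0
}.

Definition level_union (X : Type) (r : nat -> nat) (s : nat -> nat -> nat)
  (L : nat -> nat -> X -> Prop) (A : X -> Prop) : Prop :=
  exists l : list (nat * nat),
    (forall p, In p l -> (snd p < height r s (fst p))%nat) /\
    (forall x, A x <-> exists p, In p l /\ L (fst p) (snd p) x).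

Definition inter (X : Type) (A B : X -> Prop) : X -> Prop := fun x => A x /\ B x.

Definition u_coef (X : Type) (M : MeasureSpace X) (T : X -> X) (F : X -> Prop) (k : nat) : R :=
  muR M (inter F (iter_image T k F)) / (muR M F) ^ 2.

Definition a_coef (X : Type) (M : MeasureSpace X) (T : X -> X) (F : X -> Prop) (n : nat) : R :=
  sumR (u_coef M T F) n.

From Stdlib Require Import Arith Reals Lia Lra List Classical ClassicalEpsilon FunctionalExtensionality PropExtensionality.

Open Scope R_scope.

(* Fix a column C_p of height h_p and level width w_p, and write
   corr p i j k = mu(L_p i ∩ T^k L_p j).  As T maps every level of C_p onto
   the one above, corr p i j k only depends on k + j - i, so every partial sum
   sum_{k<n} corr p i j k is within h_p w_p of S_p(n) = sum_{k<n} corr p 0 0 k.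
   A finite union of levels is, from some column on, a union E of levels of
   C_p; for two such unions E, F with #E, #F levels this gives
     sum_{k<n} mu(E ∩ T^k F) = #E #F S_p(n) + O(1)   (uniformly in n),
   and mu(E) = #E w_p.  Applied to E = F = I, the left side is mu(I)^2 a_n(I),
   which tends to infinity: the diagonal terms already contribute a triangular
   number of full levels, while #I >= p + 1 because w_p <= mu(I)/(p + 1).
   Dividing, the averages tend to mu(I)^2 #A #B / #I^2 = mu(A) mu(B). *)

Lemma pred_ext {X : Type} {E F : X -> Prop} : (forall x, E x <-> F x) -> E = F.
Proof.
  intro H; apply functional_extensionality; intro x.
  apply propositional_extensionality; auto.
Qed.

Definition indic (P : Prop) : R := if excluded_middle_informative P then 1 else 0.

Lemma indic_bounds P : 0 <= indic P <= 1.
Proof. unfold indic; destruct excluded_middle_informative; lra. Qed.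

Lemma indic_idem P : indic P * indic P = indic P.
Proof. unfold indic; destruct excluded_middle_informative; lra. Qed.

Lemma sumR_ext f g n : (forall i, (i < n)%nat -> f i = g i) -> sumR f n = sumR g n.
Proof.
  induction n as [|n IH]; intro H; simpl; auto.
  rewrite IH by (intros; apply H; lia); rewrite H by lia; reflexivity.
Qed.

Lemma sumR_add f g n : sumR (fun i => f i + g i) n = sumR f n + sumR g n.
Proof. induction n; simpl; lra. Qed.

Lemma sumR_sub f g n : sumR (fun i => f i - g i) n = sumR f n - sumR g n.
Proof. induction n; simpl; lra. Qed.

Lemma sumR_scal_l c f n : c * sumR f n = sumR (fun i => c * f i) n.
Proof. induction n; simpl; lra. Qed.

Lemma sumR_scal_r f n c : sumR f n * c = sumR (fun i => f i * c) n.
Proof. induction n; simpl; lra. Qed.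

Lemma sumR_div f c n : sumR (fun k => f k / c) n = sumR f n / c.
Proof. induction n; simpl; unfold Rdiv in *; lra. Qed.

Lemma sumR_const c n : sumR (fun _ => c) n = INR n * c.
Proof. induction n; simpl sumR; [simpl; lra|]. rewrite S_INR; lra. Qed.

Lemma sumR_swap (f : nat -> nat -> R) m n :
  sumR (fun k => sumR (fun i => f k i) n) m = sumR (fun i => sumR (fun k => f k i) m) n.
Proof.
  induction m; simpl.
  - induction n; simpl; lra.
  - rewrite IHm, <- sumR_add; reflexivity.
Qed.

Lemma sumR_le f g n : (forall i, (i < n)%nat -> f i <= g i) -> sumR f n <= sumR g n.
Proof.
  induction n as [|n IH]; intro H; simpl; [lra|].
  assert (f n <= g n) by (apply H; lia).
  assert (sumR f n <= sumR g n) by (apply IH; intros; apply H; lia).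
  lra.
Qed.

Lemma sumR_nonneg f n : (forall i, (i < n)%nat -> 0 <= f i) -> 0 <= sumR f n.
Proof.
  intro H; replace 0 with (sumR (fun _ => 0) n) by (rewrite sumR_const; lra).
  apply sumR_le; auto.
Qed.

Lemma sumR_bounds f n c : (forall k, 0 <= f k <= c) -> 0 <= sumR f n <= INR n * c.
Proof.
  intro H; rewrite <- sumR_const; split.
  - apply sumR_nonneg; intros; apply H.
  - apply sumR_le; intros; apply H.
Qed.

Lemma sumR_abs_le f n c : (forall i, (i < n)%nat -> Rabs (f i) <= c) -> Rabs (sumR f n) <= INR n * c.
Proof.
  induction n as [|n IH]; intro H; simpl sumR.
  - rewrite Rabs_R0; simpl; lra.
  - rewrite S_INR.
    assert (Rabs (f n) <= c) by (apply H; lia).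
    assert (Rabs (sumR f n) <= INR n * c) by (apply IH; intros; apply H; lia).
    pose proof (Rabs_triang (sumR f n) (f n)); lra.
Qed.

Lemma sumR_term_le f n k : (forall i, (i < n)%nat -> 0 <= f i) -> (k < n)%nat -> f k <= sumR f n.
Proof.
  induction n as [|n IH]; intros H Hk; [lia|]; simpl.
  assert (0 <= sumR f n) by (apply sumR_nonneg; intros; apply H; lia).
  assert (0 <= f n) by (apply H; lia).
  destruct (Nat.eq_dec k n) as [->|Hkn]; [lra|].
  assert (f k <= sumR f n) by (apply IH; [intros; apply H|]; lia).
  lra.
Qed.

Lemma sumR_mono_len f n m : (forall i, 0 <= f i) -> (n <= m)%nat -> sumR f n <= sumR f m.
Proof.
  intros H Hnm; induction Hnm as [|m _ IH]; simpl; [lra|].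
  specialize (H m); lra.
Qed.

Lemma sumR_shift f n d : sumR (fun k => f (k + d)%nat) n + sumR f d = sumR f (n + d).
Proof. induction n; simpl; lra. Qed.

Lemma sumR_prefix f i n : (i < n)%nat ->
  sumR (fun j => if Nat.leb j i then f j else 0) n = sumR f (S i).
Proof.
  induction n as [|n IH]; intro H; [lia|].
  destruct (Nat.eq_dec i n) as [->|Hin]; simpl sumR at 1.
  - rewrite Nat.leb_refl; simpl sumR; f_equal.
    apply sumR_ext; intros j Hj; replace (Nat.leb j n) with true; auto.
    symmetry; apply Nat.leb_le; lia.
  - rewrite IH by lia; replace (Nat.leb n i) with false; [lra|].
    symmetry; apply Nat.leb_gt; lia.
Qed.

Lemma sumR_triangular a n : (forall i, a i * a i = a i) ->
  sumR (fun i => a i * sumR a (S i)) n = sumR a n * (sumR a n + 1) / 2.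
Proof.
  intro H; induction n; simpl; [lra|]; simpl in IHn; rewrite IHn.
  specialize (H n); set (c := sumR a n) in *; nra.
Qed.

Lemma sum_f_R0_sumR g n : sum_f_R0 g n = sumR g (S n).
Proof. induction n; simpl in *; [lra|]; rewrite IHn; reflexivity. Qed.

Lemma infinite_sum_finite g n : (forall i, (n <= i)%nat -> g i = 0) -> infinite_sum g (sumR g n).
Proof.
  intros H eps He; exists n; intros m Hm.
  assert (E : sumR g (S m) = sumR g n).
  { assert (Hm' : (n <= S m)%nat) by lia.
    induction Hm' as [|m' Hnm IH]; auto; simpl; rewrite H by lia; lra. }
  unfold R_dist; rewrite sum_f_R0_sumR, E, Rminus_diag, Rabs_R0; lra.
Qed.

Lemma sumR_shift_close (f1 f2 : nat -> R) c d n :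
  (forall k, 0 <= f1 k <= c) -> (forall k, 0 <= f2 k <= c) ->
  (forall k, f1 (k + d)%nat = f2 k) -> Rabs (sumR f1 n - sumR f2 n) <= INR d * c.
Proof.
  intros H1 H2 H12.
  assert (0 <= c) by (destruct (H1 O); lra).
  apply Rabs_le.
  destruct (le_lt_dec d n) as [Hdn|Hdn].
  - replace n with ((n - d) + d)%nat by lia.
    rewrite <- (sumR_shift f1), (sumR_ext _ f2) by auto.
    rewrite Nat.add_comm, <- (sumR_shift f2 d (n - d)).
    pose proof (sumR_bounds f1 d c H1).
    pose proof (sumR_bounds (fun k => f2 (k + (n - d))%nat) d c (fun k => H2 _)).
    lra.
  - pose proof (sumR_bounds f1 n c H1); pose proof (sumR_bounds f2 n c H2).
    assert (INR n * c <= INR d * c) by (apply Rmult_le_compat_r; auto; apply le_INR; lia).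
    lra.
Qed.

Lemma cv_ratio_common_growth (N D S : nat -> R) (a b c K1 K2 : R) : 0 < b -> 0 < c ->
  (forall n, Rabs (N n - a * S n) <= K1) -> (forall n, Rabs (D n - b * S n) <= K2) ->
  (forall K, exists n0, forall n, (n0 <= n)%nat -> D n >= K) ->
  Un_cv (fun n => / (D n / c) * N n) (c * a / b).
Proof.
  intros Hb Hc H1 H2 Hdiv eps He.
  set (C0 := b * K1 + Rabs a * K2).
  assert (HC0 : 0 <= C0).
  { specialize (H1 O); specialize (H2 O).
    pose proof (Rabs_pos (N 0%nat - a * S 0%nat)); pose proof (Rabs_pos (D 0%nat - b * S 0%nat)).
    pose proof (Rabs_pos a); unfold C0; nra. }
  destruct (Hdiv (c * C0 / (b * eps) + 1)) as [n0 Hn0]; exists n0; intros n Hn.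
  specialize (Hn0 n Hn); unfold R_dist.
  assert (Hq : 0 <= c * C0 / (b * eps))
    by (unfold Rdiv; apply Rmult_le_pos; [nra|left; apply Rinv_0_lt_compat; nra]).
  assert (HD : 0 < D n) by lra.
  set (Z := b * (N n - a * S n) - a * (D n - b * S n)).
  replace (/ (D n / c) * N n - c * a / b) with (c * Z / (b * D n)) by (unfold Z; field; lra).
  assert (HZ : Rabs Z <= C0).
  { unfold Z, C0, Rminus at 1; eapply Rle_trans; [apply Rabs_triang|].
    rewrite Rabs_Ropp, !Rabs_mult, (Rabs_right b) by lra.
    specialize (H1 n); specialize (H2 n); pose proof (Rabs_pos a).
    apply Rplus_le_compat; apply Rmult_le_compat_l; lra. }
  unfold Rdiv; rewrite !Rabs_mult, Rabs_inv, (Rabs_right c), (Rabs_right (b * D n)) by nra.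
  apply (Rmult_lt_reg_r (b * D n)); [nra|].
  rewrite Rmult_assoc, Rinv_l, Rmult_1_r by nra.
  assert (b * eps * (c * C0 / (b * eps)) = c * C0) by (field; lra).
  assert (b * eps * D n >= b * eps * (c * C0 / (b * eps) + 1)) by (apply Rmult_ge_compat_l; nra).
  pose proof (Rabs_pos Z); nra.
Qed.
Section MeasureFacts.
Variables (X : Type) (M : MeasureSpace X).

Lemma meas_or E F : measurable M E -> measurable M F -> measurable M (fun x => E x \/ F x).
Proof.
  intros HE HF.
  pose (G := fun n : nat => match n with O => E | _ => F end).
  replace (fun x => E x \/ F x) with (fun x => exists n, G n x).
  - apply meas_union; intros [|n]; assumption.
  - apply pred_ext; intro x; split.
    + intros [[|n] Hn]; simpl in Hn; auto.
    + intros [Hx|Hx]; [exists O|exists 1%nat]; auto.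
Qed.

Lemma meas_and E F : measurable M E -> measurable M F -> measurable M (fun x => E x /\ F x).
Proof.
  intros HE HF.
  replace (fun x => E x /\ F x) with (fun x => ~ (~ E x \/ ~ F x)).
  - apply meas_compl, meas_or; apply meas_compl; auto.
  - apply pred_ext; intro x; tauto.
Qed.

Lemma meas_guard (P : Prop) E : (P -> measurable M E) -> measurable M (fun x => P /\ E x).
Proof.
  intro H; destruct (classic P) as [HP|HP].
  - replace (fun x => P /\ E x) with E; auto; apply pred_ext; tauto.
  - replace (fun x => P /\ E x) with (fun _ : X => False); [apply meas_empty|].
    apply pred_ext; tauto.
Qed.

Lemma meas_finite_union (F : nat -> X -> Prop) n : (forall i, (i < n)%nat -> measurable M (F i)) ->
  measurable M (fun x => exists i, (i < n)%nat /\ F i x).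
Proof.
  intro H; apply (meas_union M (fun i x => (i < n)%nat /\ F i x)).
  intro i; apply meas_guard; auto.
Qed.

Lemma muR_of_mu E a : mu M E = Some a -> muR M E = a.
Proof. unfold muR; intro H; rewrite H; reflexivity. Qed.

Lemma muR_nonneg E : 0 <= muR M E.
Proof. unfold muR; destruct (mu M E) eqn:H; [apply (mu_nonneg M E H)|lra]. Qed.

Lemma mu_pair_series E F : measurable M E -> measurable M F -> (forall x, E x -> F x -> False) ->
  esum_is (fun n => mu M (match n with O => E | 1%nat => F | _ => fun _ => False end))
          (mu M (fun x => E x \/ F x)).
Proof.
  intros HE HF Hd.
  pose (G := fun n : nat => match n with O => E | 1%nat => F | _ => fun _ : X => False end).
  assert (Hm : forall n, measurable M (G n)) by (intros [|[|n]]; simpl; auto; apply meas_empty).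
  assert (Hdis : forall m n, m <> n -> forall x, G m x -> G n x -> False)
    by (intros [|[|m]] [|[|n]] Hmn x; simpl; try tauto; eauto).
  replace (fun x => E x \/ F x) with (fun x => exists n, G n x).
  - exact (mu_sigma M G Hm Hdis).
  - apply pred_ext; intro x; split.
    + intros [[|[|n]] Hn]; simpl in Hn; tauto.
    + intros [Hx|Hx]; [exists O|exists 1%nat]; auto.
Qed.

Lemma mu_add E F a b : measurable M E -> measurable M F -> (forall x, E x -> F x -> False) ->
  mu M E = Some a -> mu M F = Some b -> mu M (fun x => E x \/ F x) = Some (a + b).
Proof.
  intros HE HF Hd Ha Hb.
  pose proof (mu_pair_series E F HE HF Hd) as H.
  pose (g := fun n : nat => match n with O => a | 1%nat => b | _ => 0 end).
  assert (Hg : forall n, mu M (match n with O => E | 1%nat => F | _ => fun _ => False end) = Some (g n))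
    by (intros [|[|n]]; simpl; auto; apply mu_empty).
  assert (Hs : infinite_sum g (a + b)).
  { replace (a + b) with (sumR g 2) by (simpl; lra).
    apply infinite_sum_finite; intros [|[|i]] Hi; [lia|lia|reflexivity]. }
  destruct (mu M (fun x => E x \/ F x)) as [l|]; simpl in H.
  - destruct H as [g' [Hg' Hs']]; f_equal.
    assert (Eg : forall n, g' n = g n) by (intro n; specialize (Hg' n); rewrite Hg in Hg'; congruence).
    apply (uniqueness_sum g' l (a + b)); auto.
    intros eps He; destruct (Hs eps He) as [N HN]; exists N; intros n Hn.
    rewrite (sum_eq g' g) by auto; auto.
  - exfalso; apply H; exists g, (a + b); auto.
Qed.

Lemma mu_mono E F t : measurable M E -> measurable M F -> (forall x, E x -> F x) ->
  mu M F = Some t -> exists a, mu M E = Some a /\ 0 <= a <= t.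
Proof.
  intros HE HF Hs Ht.
  assert (HD : measurable M (fun x => F x /\ ~ E x)) by (apply meas_and; auto; apply meas_compl; auto).
  assert (Hd : forall x, E x -> F x /\ ~ E x -> False) by tauto.
  replace F with (fun x => E x \/ (F x /\ ~ E x)) in Ht
    by (apply pred_ext; intro x; specialize (Hs x); destruct (classic (E x)); tauto).
  pose proof (mu_pair_series E _ HE HD Hd) as H; cbv beta in H; rewrite Ht in H.
  destruct H as [g [Hg _]].
  pose proof (Hg O) as Ha; pose proof (Hg 1%nat) as Hb; simpl in Ha, Hb.
  rewrite (mu_add _ _ _ _ HE HD Hd Ha Hb) in Ht; injection Ht as <-.
  pose proof (mu_nonneg M _ Ha); pose proof (mu_nonneg M _ Hb).
  exists (g O); split; auto; lra.
Qed.

Lemma mu_finite_union (F : nat -> X -> Prop) n :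
  (forall i, (i < n)%nat -> measurable M (F i)) ->
  (forall i j, (i < n)%nat -> (j < n)%nat -> i <> j -> forall x, F i x -> F j x -> False) ->
  (forall i, (i < n)%nat -> mu M (F i) = Some (muR M (F i))) ->
  mu M (fun x => exists i, (i < n)%nat /\ F i x) = Some (sumR (fun i => muR M (F i)) n).
Proof.
  induction n as [|n IH]; intros Hm Hd Hf; simpl.
  - replace (fun x => exists i, (i < 0)%nat /\ F i x) with (fun _ : X => False); [apply mu_empty|].
    apply pred_ext; intro x; split; [tauto|]; intros [i [Hi _]]; lia.
  - replace (fun x => exists i, (i < S n)%nat /\ F i x) with
      (fun x => (exists i, (i < n)%nat /\ F i x) \/ F n x).
    + apply mu_add.
      * apply meas_finite_union; intros; apply Hm; lia.
      * apply Hm; lia.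
      * intros x [i [Hi Hx]] Hx'; exact (Hd i n ltac:(lia) ltac:(lia) ltac:(lia) x Hx Hx').
      * apply IH.
        -- intros; apply Hm; lia.
        -- intros i j Hi Hj; apply Hd; lia.
        -- intros; apply Hf; lia.
      * apply Hf; lia.
    + apply pred_ext; intro x; split.
      * intros [[i [Hi Hx]]|Hx]; [exists i|exists n]; split; auto; lia.
      * intros [i [Hi Hx]]; destruct (Nat.eq_dec i n) as [->|Hin]; auto.
        left; exists i; split; auto; lia.
Qed.

Lemma mu_guard (P : Prop) E a : (P -> mu M E = Some a) -> mu M (fun x => P /\ E x) = Some (indic P * a).
Proof.
  intro H; unfold indic; destruct excluded_middle_informative as [HP|HP].
  - replace (fun x => P /\ E x) with E by (apply pred_ext; tauto).
    rewrite H by auto; f_equal; lra.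
  - replace (fun x => P /\ E x) with (fun _ : X => False) by (apply pred_ext; tauto).
    rewrite mu_empty; f_equal; lra.
Qed.

End MeasureFacts.
Section RankOneColumns.
Variables (X : Type) (M : MeasureSpace X) (T Tinv : X -> X)
  (r : nat -> nat) (s : nat -> nat -> nat) (L : nat -> nat -> X -> Prop).
Hypothesis HT : RankOne M T r s L.
Hypothesis HTinv_T : forall x, Tinv (T x) = x.
Hypothesis HT_Tinv : forall x, T (Tinv x) = x.
Hypothesis HTinv_meas : forall E, measurable M E -> measurable M (fun x => E (Tinv x)).

Notation h := (height r s).
Notation I := (L 0%nat 0%nat).
Notation w p := (width (muR M I) r p).

Lemma iter_Tinv_T k y : Nat.iter k Tinv (Nat.iter k T y) = y.
Proof.
  revert y; induction k as [|k IH]; intro y; auto.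
  rewrite Nat.iter_succ_r; simpl; rewrite HTinv_T; auto.
Qed.

Lemma iter_T_Tinv k y : Nat.iter k T (Nat.iter k Tinv y) = y.
Proof.
  revert y; induction k as [|k IH]; intro y; auto.
  rewrite Nat.iter_succ_r; simpl; rewrite HT_Tinv; auto.
Qed.

Lemma iter_image_iff k F x : iter_image T k F x <-> F (Nat.iter k Tinv x).
Proof.
  unfold iter_image; split.
  - intros [y [Hy <-]]; rewrite iter_Tinv_T; auto.
  - intro H; exists (Nat.iter k Tinv x); split; auto; apply iter_T_Tinv.
Qed.

Lemma iter_image_meas k F : measurable M F -> measurable M (iter_image T k F).
Proof.
  intro HF; rewrite (pred_ext (iter_image_iff k F)).
  revert F HF; induction k as [|k IH]; intros F HF; simpl; auto.
  apply (IH (fun z => F (Tinv z))), HTinv_meas, HF.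
Qed.

Lemma mu_preimage_Tinv E : measurable M E -> mu M (fun x => E (Tinv x)) = mu M E.
Proof.
  intro HE; rewrite <- (ro_pres HT (fun x => E (Tinv x))) by (apply HTinv_meas; auto).
  f_equal; apply pred_ext; intro x; rewrite HTinv_T; tauto.
Qed.

Lemma level_pred p i y : (S i < h p)%nat -> (L p (S i) y <-> L p i (Tinv y)).
Proof. intro Hi; rewrite (ro_up HT p Hi (Tinv y)), HT_Tinv; tauto. Qed.

Definition corr p i j k := muR M (inter (L p i) (iter_image T k (L p j))).

Lemma corr_set_meas p i j k : (i < h p)%nat -> (j < h p)%nat ->
  measurable M (inter (L p i) (iter_image T k (L p j))).
Proof.
  intros; apply meas_and; [|apply iter_image_meas]; apply (ro_Lmeas HT); auto.
Qed.

Lemma corr_finite p i j k : (i < h p)%nat -> (j < h p)%nat ->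
  mu M (inter (L p i) (iter_image T k (L p j))) = Some (corr p i j k) /\ 0 <= corr p i j k <= w p.
Proof.
  intros Hi Hj.
  destruct (mu_mono X M (inter (L p i) (iter_image T k (L p j))) (L p i) (w p)) as [a [Ha Hb]].
  - apply corr_set_meas; auto.
  - apply (ro_Lmeas HT); auto.
  - intros x [Hx _]; auto.
  - apply (ro_width HT); auto.
  - unfold corr; rewrite (muR_of_mu X M _ _ Ha); auto.
Qed.

(* Since T^-1 maps each level onto the one below, lowering both levels
   preserves the correlation. *)
Lemma corr_lower_both p i j k : (S i < h p)%nat -> (S j < h p)%nat ->
  corr p (S i) (S j) k = corr p i j k.
Proof.
  intros Hi Hj; unfold corr.
  replace (inter (L p (S i)) (iter_image T k (L p (S j))))
    with (fun x => inter (L p i) (iter_image T k (L p j)) (Tinv x)).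
  - unfold muR; rewrite mu_preimage_Tinv by (apply corr_set_meas; lia); reflexivity.
  - apply pred_ext; intro x; unfold inter; rewrite !iter_image_iff.
    rewrite (level_pred p i x Hi), (level_pred p j _ Hj), <- Nat.iter_succ, <- Nat.iter_succ_r.
    tauto.
Qed.

Lemma corr_raise_second p i j k : (S j < h p)%nat -> corr p i (S j) k = corr p i j (S k).
Proof.
  intro Hj; unfold corr; f_equal; apply pred_ext; intro x; unfold inter.
  rewrite !iter_image_iff, (level_pred p j _ Hj); simpl; tauto.
Qed.

Lemma corr_time_to_level p i t : forall j k, (j + t < h p)%nat ->
  corr p i j (k + t) = corr p i (j + t) k.
Proof.
  induction t as [|t IH]; intros j k Hj; [rewrite !Nat.add_0_r; auto|].
  replace (k + S t)%nat with (S (k + t)) by lia; rewrite <- corr_raise_second by lia.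
  rewrite IH by lia; f_equal; lia.
Qed.

Lemma corr_translate p k : forall i j, (i <= j)%nat -> (j < h p)%nat ->
  corr p i j k = corr p 0 (j - i) k.
Proof.
  induction i as [|i IH]; intros j Hij Hj; [rewrite Nat.sub_0_r; auto|].
  destruct j as [|j]; [lia|].
  rewrite corr_lower_both, IH by lia; reflexivity.
Qed.

Lemma corr_normal_up p i j k : (i <= j)%nat -> (j < h p)%nat ->
  corr p i j k = corr p 0 0 (k + (j - i)).
Proof.
  intros Hij Hj; rewrite corr_translate, corr_time_to_level by lia; reflexivity.
Qed.

Lemma corr_normal_down p i j k : (j <= i)%nat -> (i < h p)%nat ->
  corr p i j (k + (i - j)) = corr p 0 0 k.
Proof.
  intros Hji Hi; rewrite corr_time_to_level by lia.
  replace (j + (i - j))%nat with i by lia.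
  rewrite corr_translate, Nat.sub_diag by lia; reflexivity.
Qed.

Lemma height_pos p : (0 < h p)%nat.
Proof.
  induction p as [|p IH]; simpl; [lia|].
  pose proof (ro_r HT p); nia.
Qed.

Lemma corr_base p : corr p 0 0 0 = w p.
Proof.
  unfold corr; apply muR_of_mu.
  replace (inter (L p 0) (iter_image T 0 (L p 0))) with (L p 0).
  - apply (ro_width HT), height_pos.
  - apply pred_ext; intro x; unfold inter; rewrite iter_image_iff; simpl; tauto.
Qed.

Definition base_sum p n := sumR (fun k => corr p 0 0 k) n.

Lemma corr_sum_close p i j n : (i < h p)%nat -> (j < h p)%nat ->
  Rabs (sumR (fun k => corr p i j k) n - base_sum p n) <= INR (h p) * w p.
Proof.
  intros Hi Hj; unfold base_sum.
  assert (Hb : forall i j, (i < h p)%nat -> (j < h p)%nat -> forall k, 0 <= corr p i j k <= w p)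
    by (intros; apply corr_finite; auto).
  assert (Hw : 0 <= w p) by (destruct (Hb i j Hi Hj O); lra).
  destruct (le_lt_dec i j) as [Hij|Hij].
  - rewrite Rabs_minus_sym; eapply Rle_trans.
    + apply (sumR_shift_close (fun k => corr p 0 0 k) (fun k => corr p i j k) (w p) (j - i));
        [intro; apply Hb; lia|intro; apply Hb; auto|].
      intro k; symmetry; apply corr_normal_up; auto.
    + apply Rmult_le_compat_r; auto; apply le_INR; lia.
  - eapply Rle_trans.
    + apply (sumR_shift_close (fun k => corr p i j k) (fun k => corr p 0 0 k) (w p) (i - j));
        [intro; apply Hb; auto|intro; apply Hb; lia|].
      intro k; apply corr_normal_down; lia.
    + apply Rmult_le_compat_r; auto; apply le_INR; lia.
Qed.

Definition colset p (P : nat -> Prop) : X -> Prop :=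
  fun x => exists i, (i < h p)%nat /\ P i /\ L p i x.

Definition count p (P : nat -> Prop) : R := sumR (fun i => indic (P i)) (h p).

Lemma muR_colset p P : muR M (colset p P) = count p P * w p.
Proof.
  apply muR_of_mu; unfold colset, count; rewrite sumR_scal_r.
  assert (Hw : forall i, (i < h p)%nat -> mu M (fun x => P i /\ L p i x) = Some (indic (P i) * w p))
    by (intros; apply mu_guard; intros; apply (ro_width HT); auto).
  rewrite (mu_finite_union X M (fun i x => P i /\ L p i x) (h p)).
  - f_equal; apply sumR_ext; intros; apply muR_of_mu; auto.
  - intros; apply meas_guard; intros; apply (ro_Lmeas HT); auto.
  - intros i j Hi Hj Hij x [_ H1] [_ H2]; exact (ro_disj HT p Hi Hj Hij x H1 H2).
  - intros i Hi; rewrite Hw by auto; f_equal; symmetry; apply muR_of_mu; auto.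
Qed.

Lemma mu_level_colset p Q i k : (i < h p)%nat ->
  measurable M (fun x => exists j, (j < h p)%nat /\ Q j /\ inter (L p i) (iter_image T k (L p j)) x) /\
  mu M (fun x => exists j, (j < h p)%nat /\ Q j /\ inter (L p i) (iter_image T k (L p j)) x)
    = Some (sumR (fun j => indic (Q j) * corr p i j k) (h p)).
Proof.
  intro Hi.
  assert (Hm : forall j, (j < h p)%nat ->
            measurable M (fun x => Q j /\ inter (L p i) (iter_image T k (L p j)) x))
    by (intros; apply meas_guard; intros; apply corr_set_meas; auto).
  assert (Hmu : forall j, (j < h p)%nat ->
            mu M (fun x => Q j /\ inter (L p i) (iter_image T k (L p j)) x) = Some (indic (Q j) * corr p i j k))
    by (intros; apply mu_guard; intros; apply corr_finite; auto).
  split; [apply (meas_finite_union X M (fun j x => Q j /\ _ x)); auto|].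
  rewrite (mu_finite_union X M (fun j x => Q j /\ inter (L p i) (iter_image T k (L p j)) x) (h p)).
  - f_equal; apply sumR_ext; intros; apply muR_of_mu; auto.
  - auto.
  - intros j j' Hj Hj' Hjj x [_ [_ H1]] [_ [_ H2]]; rewrite iter_image_iff in H1, H2.
    exact (ro_disj HT p Hj Hj' Hjj _ H1 H2).
  - intros j Hj; rewrite Hmu by auto; f_equal; symmetry; apply muR_of_mu; auto.
Qed.

Lemma muR_colset_corr p P Q k : muR M (inter (colset p P) (iter_image T k (colset p Q))) =
  sumR (fun i => sumR (fun j => indic (P i) * indic (Q j) * corr p i j k) (h p)) (h p).
Proof.
  replace (inter (colset p P) (iter_image T k (colset p Q))) with
    (fun x => exists i, (i < h p)%nat /\ P i /\
       (exists j, (j < h p)%nat /\ Q j /\ inter (L p i) (iter_image T k (L p j)) x)).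
  2:{ apply pred_ext; intro x; unfold inter, colset; rewrite !iter_image_iff; split.
      - intros [i [Hi [HP [j [Hj [HQ [H1 H2]]]]]]]; rewrite iter_image_iff in H2.
        split; [exists i|exists j]; auto.
      - intros [[i [Hi [HP H1]]] [j [Hj [HQ H2]]]]; exists i; repeat split; auto.
        exists j; repeat split; auto; rewrite iter_image_iff; auto. }
  apply muR_of_mu.
  assert (Hmu : forall i, (i < h p)%nat -> mu M (fun x => P i /\
       (exists j, (j < h p)%nat /\ Q j /\ inter (L p i) (iter_image T k (L p j)) x))
       = Some (sumR (fun j => indic (P i) * indic (Q j) * corr p i j k) (h p))).
  { intros i Hi; rewrite (mu_guard X M _ _ _ (fun _ => proj2 (mu_level_colset p Q i k Hi))).
    f_equal; rewrite sumR_scal_l; apply sumR_ext; intros; ring. }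
  rewrite (mu_finite_union X M (fun i x => P i /\
     (exists j, (j < h p)%nat /\ Q j /\ inter (L p i) (iter_image T k (L p j)) x)) (h p)).
  - f_equal; apply sumR_ext; intros; apply muR_of_mu; auto.
  - intros i Hi; apply meas_guard; intros; apply (mu_level_colset p Q i k Hi).
  - intros i i' Hi Hi' Hii x [_ [j [_ [_ [H1 _]]]]] [_ [j' [_ [_ [H2 _]]]]].
    exact (ro_disj HT p Hi Hi' Hii _ H1 H2).
  - intros i Hi; rewrite Hmu by auto; f_equal; symmetry; apply muR_of_mu; auto.
Qed.

Lemma colset_corr_sum_close p P Q n :
  Rabs (sumR (fun k => muR M (inter (colset p P) (iter_image T k (colset p Q)))) n
        - count p P * count p Q * base_sum p n)
  <= INR (h p) * (INR (h p) * (INR (h p) * w p)).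
Proof.
  rewrite (sumR_ext _ _ n (fun k _ => muR_colset_corr p P Q k)), sumR_swap.
  rewrite (sumR_ext _ (fun i => sumR (fun j => indic (P i) * indic (Q j) * sumR (fun k => corr p i j k) n) (h p))).
  2:{ intros i Hi; rewrite sumR_swap; apply sumR_ext; intros; symmetry; apply sumR_scal_l. }
  replace (count p P * count p Q * base_sum p n) with
    (sumR (fun i => sumR (fun j => indic (P i) * indic (Q j) * base_sum p n) (h p)) (h p)).
  2:{ unfold count; rewrite Rmult_assoc, sumR_scal_r; apply sumR_ext; intros.
      rewrite sumR_scal_r, sumR_scal_l; apply sumR_ext; intros; ring. }
  rewrite <- sumR_sub; apply sumR_abs_le; intros i Hi.
  rewrite <- sumR_sub; apply sumR_abs_le; intros j Hj.
  rewrite <- Rmult_minus_distr_l, Rabs_mult.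
  pose proof (corr_sum_close p i j n Hi Hj).
  pose proof (indic_bounds (P i)); pose proof (indic_bounds (Q j)).
  assert (0 <= indic (P i) * indic (Q j) <= 1) by nra.
  rewrite (Rabs_right (indic (P i) * indic (Q j))) by lra.
  pose proof (Rabs_pos (sumR (fun k => corr p i j k) n - base_sum p n)); nra.
Qed.

Definition in_column p (E : X -> Prop) := exists P, forall x, E x <-> colset p P x.

Lemma sumN_mono f a b : (a <= b)%nat -> (sumN f a <= sumN f b)%nat.
Proof. intro H; induction H; simpl; lia. Qed.

Lemma in_column_succ p E : in_column p E -> in_column (S p) E.
Proof.
  intros [P HP].
  exists (fun i' => exists i k, (i < h p)%nat /\ P i /\ (k < r p)%nat /\ i' = (offset r s p k + i)%nat).
  intro x; rewrite HP; unfold colset; split.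
  - intros [i [Hi [HPi Hx]]]; apply (ro_cut HT p Hi) in Hx; destruct Hx as [k [Hk Hx]].
    exists (offset r s p k + i)%nat; split; [|split; eauto 10].
    simpl; unfold offset; pose proof (sumN_mono (s p) k (r p) ltac:(lia)); nia.
  - intros [i' [_ [[i [k [Hi [HPi [Hk ->]]]]] Hx]]]; exists i; repeat split; auto.
    apply (ro_cut HT p Hi); eauto.
Qed.

Lemma in_column_mono p q E : (p <= q)%nat -> in_column p E -> in_column q E.
Proof. intro H; induction H; auto; intro; apply in_column_succ; auto. Qed.

Lemma in_column_level p i : (i < h p)%nat -> in_column p (L p i).
Proof.
  intro Hi; exists (fun i' => i' = i); intro x; unfold colset; split.
  - intro; exists i; auto.
  - intros [i' [_ [-> H]]]; auto.
Qed.

Lemma in_column_or p E F : in_column p E -> in_column p F -> in_column p (fun x => E x \/ F x).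
Proof.
  intros [P HP] [Q HQ]; exists (fun i => P i \/ Q i); intro x; rewrite HP, HQ; unfold colset; split.
  - intros [[i [? [? ?]]]|[i [? [? ?]]]]; exists i; tauto.
  - intros [i [? [[?|?] ?]]]; [left|right]; exists i; tauto.
Qed.

Lemma level_union_in_column E : level_union r s L E ->
  exists p0, forall p, (p0 <= p)%nat -> in_column p E.
Proof.
  intros [l [Hl HE]].
  assert (Hunion : exists p0, forall p, (p0 <= p)%nat ->
            in_column p (fun x => exists q, In q l /\ L (fst q) (snd q) x)).
  { clear HE; induction l as [|q l IH].
    - exists O; intros p _; exists (fun _ => False); intro x; unfold colset; split.
      + intros [q [[] _]].
      + intros [i [_ [[] _]]].
    - destruct IH as [p0 Hp0]; [intros; apply Hl; simpl; auto|].
      exists (Nat.max p0 (fst q)); intros p Hp.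
      assert (Hq := in_column_mono (fst q) p _ ltac:(lia) (in_column_level _ _ (Hl q (or_introl eq_refl)))).
      destruct (in_column_or p _ _ Hq (Hp0 p ltac:(lia))) as [P HP].
      exists P; intro x; rewrite <- HP; split.
      + intros [q' [[<-|Hq'] Hx]]; [left|right]; eauto.
      + intros [Hx|[q' [Hq' Hx]]]; [exists q|exists q']; simpl; auto. }
  destruct Hunion as [p0 Hp0]; exists p0; intros p Hp.
  destruct (Hp0 p Hp) as [P HP]; exists P; intro x; rewrite HE; auto.
Qed.

(* [return_sum n = mu(I)^2 a_n(I)]: the correlations of the base I with itself. *)
Definition return_sum n := sumR (fun k => muR M (inter I (iter_image T k I))) n.

Lemma return_sum_mono n m : (n <= m)%nat -> return_sum n <= return_sum m.
Proof. intro; apply sumR_mono_len; auto; intro; apply muR_nonneg. Qed.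

(* If I = colset p P, the diagonal correlations mu(L_p i ∩ T^(i-j) L_p j) = w_p,
   j <= i in P, already give [return_sum (h p) >= w_p #I (#I + 1) / 2]. *)
Lemma return_sum_lower p P : (forall x, I x <-> colset p P x) ->
  return_sum (h p) >= w p * (count p P * (count p P + 1) / 2).
Proof.
  intro HP; unfold return_sum.
  rewrite (sumR_ext _ (fun k => sumR (fun i => sumR (fun j =>
             indic (P i) * indic (P j) * corr p i j k) (h p)) (h p)))
    by (intros; rewrite (pred_ext HP); apply muR_colset_corr).
  rewrite sumR_swap.
  unfold count; rewrite <- sumR_triangular by (intro; apply indic_idem).
  rewrite sumR_scal_l; apply Rle_ge, sumR_le; intros i Hi.
  rewrite sumR_swap, <- (sumR_prefix _ i (h p) Hi), !sumR_scal_l.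
  apply sumR_le; intros j Hj.
  assert (Hb : forall k, 0 <= indic (P i) * indic (P j) * corr p i j k).
  { intro k; pose proof (indic_bounds (P i)); pose proof (indic_bounds (P j)).
    pose proof (corr_finite p i j k Hi Hj); apply Rmult_le_pos; [nra|lra]. }
  destruct (Nat.leb j i) eqn:Hji.
  - apply Nat.leb_le in Hji.
    eapply Rle_trans; [|apply (sumR_term_le _ (h p) (i - j)); [intros; apply Hb|lia]].
    rewrite <- (Nat.add_0_l (i - j)), corr_normal_down, corr_base by lia; lra.
  - rewrite !Rmult_0_r; apply sumR_nonneg; intros; apply Hb.
Qed.

Lemma width_pos p : 0 < w p.
Proof.
  induction p as [|p IH]; simpl; [apply (ro_I HT)|].
  assert (0 < INR (r p)) by (apply lt_0_INR; pose proof (ro_r HT p); lia).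
  apply Rdiv_lt_0_compat; auto.
Qed.

(* Since every cut makes at least two pieces, [w_p <= mu(I) / (p + 1)]. *)
Lemma width_decay p : w p * (INR p + 1) <= muR M I.
Proof.
  induction p as [|p IH]; [simpl; lra|].
  assert (2 <= INR (r p)) by (apply (le_INR 2), (ro_r HT)).
  pose proof (width_pos p); pose proof (pos_INR p).
  rewrite S_INR; change (w (S p)) with (w p / INR (r p)).
  apply Rle_trans with (w p * (INR p + 1)); auto.
  unfold Rdiv; rewrite Rmult_assoc; apply Rmult_le_compat_l; [lra|].
  apply (Rmult_le_reg_l (INR (r p))); [lra|].
  rewrite <- Rmult_assoc, Rinv_r by lra; nra.
Qed.

Lemma return_sum_diverges : forall K, exists n0, forall n, (n0 <= n)%nat -> return_sum n >= K.
Proof.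
  intro K; assert (HI : 0 < muR M I) by apply (ro_I HT).
  destruct (INR_unbounded (2 * K / muR M I)) as [p Hp].
  destruct (in_column_mono 0 p I ltac:(lia) (in_column_level 0 0 ltac:(simpl; lia))) as [P HP].
  exists (h p); intros n Hn; apply Rle_ge.
  eapply Rle_trans; [|apply return_sum_mono; eauto].
  pose proof (return_sum_lower p P HP).
  pose proof (muR_colset p P) as HC; rewrite <- (pred_ext HP) in HC.
  pose proof (width_decay p); pose proof (width_pos p); pose proof (pos_INR p).
  assert (count p P >= INR p + 1) by (apply Rle_ge, (Rmult_le_reg_r (w p)); auto; lra).
  assert (2 * K / muR M I * muR M I = 2 * K) by (field; lra).
  assert (INR p * muR M I >= 2 * K / muR M I * muR M I) by (apply Rmult_ge_compat_r; lra).
  nra.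
Qed.

Lemma common_column A B : level_union r s L A -> level_union r s L B ->
  exists m PA PB PI, A = colset m PA /\ B = colset m PB /\ I = colset m PI.
Proof.
  intros HA HB.
  destruct (level_union_in_column A HA) as [pA HpA], (level_union_in_column B HB) as [pB HpB].
  set (m := Nat.max pA pB).
  destruct (HpA m ltac:(lia)) as [PA HPA], (HpB m ltac:(lia)) as [PB HPB].
  destruct (in_column_mono 0 m I ltac:(lia) (in_column_level 0 0 ltac:(simpl; lia))) as [PI HPI].
  exists m, PA, PB, PI; repeat split; apply pred_ext; auto.
Qed.

Lemma cesaro_correlation_ratio A B : level_union r s L A -> level_union r s L B ->
  Un_cv (fun n => / a_coef M T I n * sumR (fun k => muR M (inter A (iter_image T k B))) n)
        (muR M A * muR M B).
Proof.
  intros HA HB.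
  destruct (common_column A B HA HB) as [m [PA [PB [PI [-> [-> EI]]]]]].
  assert (HmI : 0 < muR M I) by apply (ro_I HT).
  assert (Ha : forall n, a_coef M T I n = return_sum n / muR M I ^ 2)
    by (intro; unfold a_coef, return_sum, u_coef; apply sumR_div).
  assert (HcI : muR M I = count m PI * w m)
    by (pose proof (muR_colset m PI) as H; rewrite <- EI in H; exact H).
  assert (HdI : forall n, Rabs (return_sum n - count m PI * count m PI * base_sum m n)
                          <= INR (h m) * (INR (h m) * (INR (h m) * w m)))
    by (intro n; pose proof (colset_corr_sum_close m PI PI n) as H; rewrite <- EI in H; exact H).
  pose proof (width_pos m) as Hw.
  assert (HcI_pos : 0 < count m PI) by (apply (Rmult_lt_reg_r (w m)); lra).
  replace (muR M (colset m PA) * muR M (colset m PB))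
    with (muR M I ^ 2 * (count m PA * count m PB) / (count m PI * count m PI))
    by (rewrite !muR_colset; set (wm := w m) in *; rewrite HcI; field; lra).
  apply (Un_cv_ext (fun n => / (return_sum n / muR M I ^ 2) *
                       sumR (fun k => muR M (inter (colset m PA) (iter_image T k (colset m PB)))) n)).
  { intro n; rewrite Ha; reflexivity. }
  apply (cv_ratio_common_growth _ _ (base_sum m) _ _ _ _ _ (Rmult_lt_0_compat _ _ HcI_pos HcI_pos) (pow_lt _ 2 HmI)
           (colset_corr_sum_close m PA PB) HdI return_sum_diverges).
Qed.

End RankOneColumns.

(* The averages (1/a_n(I)) sum_{k<n} mu(A ∩ T^k B) converge to mu(A) mu(B) for
   finite unions of levels A, B. *)
Theorem mainTheorem2 (X : Type) (M : MeasureSpace X) (T : X -> X)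
  (r : nat -> nat) (s : nat -> nat -> nat) (L : nat -> nat -> X -> Prop)
  (HT : RankOne M T r s L)
  (A B : X -> Prop)
  (HA : level_union r s L A) (HB : level_union r s L B)
  (HAI : forall x, A x -> L 0%nat 0%nat x) (HBI : forall x, B x -> L 0%nat 0%nat x) :
  Un_cv (fun n => / a_coef M T (L 0%nat 0%nat) n *
                  sumR (fun k => muR M (inter A (iter_image T k B))) n)
        (muR M A * muR M B).
Proof.
  destruct (ro_inv HT) as [Tinv [HTinv_T [HT_Tinv HTinv_meas]]].
  exact (cesaro_correlation_ratio X M T Tinv r s L HT HTinv_T HT_Tinv HTinv_meas A B HA HB).
Qed.
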